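(* The Lie algebra $\operatorname{Ker}\psi_1$, with the bracket $[(a,\gamma),(b,\varepsilon)]=(b,\varepsilon^{(a,\gamma)})-(a,\gamma^{(b,\varepsilon)})$, is isomorphic to the Lie algebra $\operatorname{Der}_{E^e}(\Lambda)$ of derivations of $\Lambda$ which are $E$-bimodule morphisms, with the commutator bracket.
   Context: Let $k$ be an algebraically closed field and $Q$ a finite quiver; $Q_n$ is the set of paths of length $n$ ($Q_0$ = vertices, $Q_1$ = arrows), $s(\gamma),t(\gamma)$ are source and terminus of a path $\gamma$; in $kQ$, $\beta\alpha$ is the concatenation ''first $\alpha$, then $\beta$'' if $t(\alpha)=s(\beta)$, and $0$ otherwise. Let $Z$ be a minimal set of paths of length $\ge 2$ (no proper subpath of an element of $Z$ lies in $Z$) such that $\Lambda=kQ/\langle Z\rangle$ is finite dimensional, and let $E\subset\Lambda$ be the subalgebra spanned by the (classes of the) vertices. Let $B$ be the set of paths (vertices included) not containing any element of $Z$ as a subpath; its classes form a basis of $\Lambda$. Paths are parallel if they have the same source and terminus; for sets of paths $X,Y$, $X//Y$ is the set of pairs $(\varepsilon,\gamma)\in X\times Y$ of parallel paths and $k(X//Y)$ the vector space with basis $X//Y$. For a path $\varepsilon$ and $(a,\gamma)\in Q_1//B$, $\varepsilon^{(a,\gamma)}$ is the sum of all paths in $B$ obtained by replacing one occurrence of $a$ in $\varepsilon$ by $\gamma$ ($0$ if none); if $\varepsilon^{(a,\gamma)}=\sum_i\varepsilon_i$ and $\eta$ is parallel to $\varepsilon$, $(\eta,\varepsilon^{(a,\gamma)}):=\sum_i(\eta,\varepsilon_i)$.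 The map $\psi_1:k(Q_1//B)\to k(Z//B)$ is $(a,\gamma)\mapsto\sum_{p\in Z}(p,p^{(a,\gamma)})$, and the bracket on $k(Q_1//B)$ is extended bilinearly from basis elements; $\operatorname{Ker}\psi_1$ is closed under it. *)

From HB Require Import structures.
From mathcomp Require Import all_boot all_order all_algebra.
Set Implicit Arguments. Unset Strict Implicit. Unset Printing Implicit Defensive.
Import GRing.Theory.
Local Open Scope ring_scope.

(* A path of a finite quiver (V, A, s, t) is encoded as a pair
   (source vertex, list of arrows in the order they are traversed);
   the trivial path e_v is (v, [::]).  In the paper's notation the path
   a_n ... a_2 a_1 (first a_1) is (s a_1, [:: a_1; a_2; ...; a_n]). *)
Definition qpath (V A : finType) := (V * seq A)%type.

Section Quiver.
Variables (k : fieldType) (V A : finType) (s t : A -> V).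

Definition tgt (p : qpath V A) : V := last p.1 (map t p.2).
Definition valid (p : qpath V A) : bool :=
  if p.2 is a :: l then (s a == p.1) && path (fun a b => t a == s b) a l
  else true.
Definition parallel (p q : qpath V A) : bool :=
  (p.1 == q.1) && (tgt p == tgt q).
Definition arrow_path (a : A) : qpath V A := (s a, [:: a]).

Variable Z : seq (qpath V A).

(* B: valid paths containing no element of Z as a subpath
   (elements of Z have length >= 2, so "subpath" = contiguous arrow sublist) *)
Definition inB (p : qpath V A) : bool :=
  valid p && all (fun z => ~~ infix z.2 p.2) Z.

(* N: a bound on the lengths of paths in B (exists since Lambda is finite
   dimensional); used only to enumerate B as a finite type. *)
Variable N : nat.

Fixpoint seqs_upto (n : nat) : seq (seq A) :=
  if n is m.+1 then [::] :: [seq a :: l | a <- enum A, l <- seqs_upto m]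
  else [:: [::]].
Definition allpaths : seq (qpath V A) :=
  [seq (v, l) | v <- enum V, l <- seqs_upto N].
Definition Bseq : seq (qpath V A) := filter inB allpaths.
Definition Btype : finType := seq_sub Bseq.

(* Lambda = kQ/<Z>, as the k-vector space with basis B *)
Local Notation Lam := {ffun Btype -> k^o}.

Definition coef (x : Lam) (q : qpath V A) : k :=
  oapp x 0 (insub q : option Btype).

Definition prefix (p : qpath V A) (i : nat) : qpath V A := (p.1, take i p.2).
Definition suffix (p : qpath V A) (i : nat) : qpath V A :=
  (tgt (prefix p i), drop i p.2).

(* product of Lambda: for basis paths, beta * alpha = beta alpha (first alpha)
   if it is a path in B, 0 otherwise; so the coefficient of p in x * y is the
   sum over the factorizations p = beta alpha of x_beta y_alpha. *)
Definition lmul (x y : Lam) : Lam :=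
  [ffun b : Btype => \sum_(i < (size (val b).2).+1)
      coef x (suffix (val b) i) * coef y (prefix (val b) i)].

Definition inE (e : Lam) : Prop :=
  forall b : Btype, (val b).2 != [::] -> e b = 0.

Definition isDer (d : Lam -> Lam) : Prop :=
  [/\ (forall (c : k) (x y : Lam), d (c *: x + y) = c *: d x + d y),
      (forall x y, d (lmul x y) = lmul (d x) y + lmul x (d y)) &
      (forall e x, inE e -> d (lmul e x) = lmul e (d x)
                          /\ d (lmul x e) = lmul (d x) e)].

Definition bvec (q : qpath V A) : Lam := [ffun b : Btype => (val b == q)%:R].

Definition replace (p : qpath V A) (i : nat) (g : qpath V A) : qpath V A :=
  (p.1, take i p.2 ++ g.2 ++ drop i.+1 p.2).

Definition repl (eps : qpath V A) (a : A) (g : qpath V A) : Lam :=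
  \sum_(i < size eps.2 | nth a eps.2 i == a) bvec (replace eps i g).

(* k(Q1//B): functions on A * B vanishing on non-parallel pairs *)
Local Notation QB := {ffun (A * Btype)%type -> k^o}.
Definition inQB (f : QB) : Prop :=
  forall (a : A) (g : Btype), ~~ parallel (arrow_path a) (val g) -> f (a, g) = 0.

(* (b, x) for x in Lambda, extended linearly in x *)
Definition pairQ (b : A) (x : Lam) : QB :=
  [ffun q : A * Btype => if q.1 == b then x q.2 else 0].

(* the bracket, extended bilinearly from
   [(a,g),(b,eps)] = (b, eps^(a,g)) - (a, g^(b,eps)) *)
Definition bracket (f g : QB) : QB :=
  \sum_(q1 : A * Btype) \sum_(q2 : A * Btype)
    (f q1 * g q2) *: (pairQ q2.1 (repl (val q2.2) q1.1 (val q1.2))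
                      - pairQ q1.1 (repl (val q1.2) q2.1 (val q2.2))).

Definition Ztype : finType := seq_sub Z.
Local Notation ZB := {ffun (Ztype * Btype)%type -> k^o}.
Definition pairZ (p : Ztype) (x : Lam) : ZB :=
  [ffun q : Ztype * Btype => if q.1 == p then x q.2 else 0].

Definition psi1 (f : QB) : ZB :=
  \sum_(q : A * Btype) f q *: \sum_(p : Ztype) pairZ p (repl (val p) q.1 (val q.2)).

Definition inKer (f : QB) : Prop := inQB f /\ psi1 f = 0.

End Quiver.

Notation Lam k s t Z N := {ffun Btype s t Z N -> k^o}.
Notation QB k s t Z N := {ffun (_ * Btype s t Z N)%type -> k^o}.
Notation ZB k s t Z N := {ffun (Ztype Z * Btype s t Z N)%type -> k^o}.

From Pilot Require Import Defs.
From HB Require Import structures.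
From mathcomp Require Import all_boot all_order all_algebra.
Set Implicit Arguments. Unset Strict Implicit. Unset Printing Implicit Defensive.
Import GRing.Theory.
Local Open Scope ring_scope.

(* A derivation d of Lambda that is an E-bimodule map kills the vertices and
   sends each arrow a into e_(t a) Lambda e_(s a); hence it is determined by
   its values on the arrows, an element f of k(Q1//B).  Conversely, f extends
   by the Leibniz rule to a derivation of kQ whose value on a path p is p^f,
   the sum of the paths obtained by replacing one arrow a of p by f(a).
   Computed inside Lambda this extension kills every path outside B as soon
   as it kills the relations, since such a path factors through some z in Z
   and p^f for p in Z is exactly the p-component of psi_1 f.  The two
   constructions are mutually inverse, and evaluating the commutator of two
   such derivations on an arrow yields the bracket. *)

Section PathCombinatorics.
Variables (V A : finType) (s t : A -> V) (Z : seq (qpath V A)).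
Local Notation tgt := (tgt t).
Local Notation valid := (valid s t).
Local Notation inB := (inB s t Z).

Lemma tgt_cat v l1 l2 : tgt (v, l1 ++ l2) = tgt (tgt (v, l1), l2).
Proof. by rewrite /Defs.tgt /= map_cat last_cat. Qed.

Lemma valid_cat v l1 l2 :
  valid (v, l1 ++ l2) = valid (v, l1) && valid (tgt (v, l1), l2).
Proof.
case: l1 => [|a l1] //; rewrite /Defs.valid /= cat_path -andbA.
congr [&& _, _ & _]; rewrite /Defs.tgt /= last_map.
by case: l2 => [|b l2] //=; rewrite eq_sym.
Qed.

Lemma valid_cons v a l : valid (v, a :: l) = (s a == v) && valid (t a, l).
Proof. by rewrite -cat1s valid_cat /Defs.valid /= andbT. Qed.

Lemma valid_source_unique v w l :
  l != [::] -> valid (v, l) -> valid (w, l) -> v = w.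
Proof.
by case: l => // a l _; rewrite !valid_cons => /andP[/eqP<- _] /andP[/eqP<- _].
Qed.

Lemma inB_valid p : inB p -> valid p.
Proof. by case/andP. Qed.

Lemma inB_cat v l1 l2 :
  inB (v, l1 ++ l2) -> inB (v, l1) /\ inB (tgt (v, l1), l2).
Proof.
rewrite /Defs.inB valid_cat => /andP[/andP[-> ->] /allP noZ] /=.
by split; apply/allP => z /noZ; apply: contra => /infix_trans; apply;
  [apply: prefix_infix | apply: suffix_infix].
Qed.

Lemma inB_prefix p i : inB p -> inB (Defs.prefix p i).
Proof. by case: p => v l; rewrite -{1}(cat_take_drop i l) => /inB_cat[]. Qed.

Lemma inB_suffix p i : inB p -> inB (Defs.suffix t p i).
Proof. by case: p => v l; rewrite -{1}(cat_take_drop i l) => /inB_cat[]. Qed.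

Lemma notin_B_infix z p : z \in Z -> infix z.2 p.2 -> ~~ inB p.
Proof. by move=> Zz zp; apply/nandP; right; apply/allPn; exists z; rewrite ?negbK. Qed.

Lemma valid_notin_B v l :
  valid (v, l) -> ~~ inB (v, l) -> exists2 z, z \in Z & infix z.2 l.
Proof. by rewrite /Defs.inB => -> /allPn[z Zz]; rewrite negbK; exists z. Qed.

Lemma arrow_inB a : (forall z, z \in Z -> (2 <= size z.2)%N) -> inB (arrow_path s a).
Proof.
move=> Zlen; apply/andP; split; first by rewrite /Defs.valid /= eqxx.
by apply/allP => z /Zlen z_ge2; apply: contraTN z_ge2 => /size_infix; rewrite -ltnNge.
Qed.

Lemma prefix_suffix_eq p q r i : (i <= size p.2)%N ->
  (Defs.prefix p i == q) && (Defs.suffix t p i == r)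
  = [&& i == size q.2, tgt q == r.1 & p == (q.1, q.2 ++ r.2)].
Proof.
case: p q r => v l [qv ql] [rv rl] /= le_il.
rewrite /Defs.suffix /Defs.prefix /= !xpair_eqE.
apply/idP/idP.
- case/andP => /andP[/eqP<- /eqP<-] /andP[/eqP<- /eqP<-].
  by rewrite size_takel // cat_take_drop !eqxx.
- case/and3P => /eqP-> /eqP<- /andP[/eqP-> /eqP->].
  by rewrite take_size_cat // drop_size_cat // !eqxx.
Qed.

End PathCombinatorics.

Lemma sum_pair_fst (I J : finType) (M : nmodType) (i : I) (F : I * J -> M) :
  \sum_(q | q.1 == i) F q = \sum_j F (i, j).
Proof.
rewrite big_mkcond (eq_bigr (fun q => if q.1 == i then F (q.1, q.2) else 0)) => [|[]//].
rewrite -(pair_bigA _ (fun x y => if x == i then F (x, y) else 0)).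
rewrite (bigD1 i) //= [X in _ + X]big1 ?addr0 => [|x /negbTE nxi].
  by apply: eq_bigr => j _; rewrite eqxx.
by apply: big1 => j _; rewrite nxi.
Qed.

Section Algebra.
Variables (k : fieldType) (V A : finType) (s t : A -> V).
Variables (Z : seq (qpath V A)) (N : nat).
Hypothesis B_bounded : forall p, inB s t Z p -> (size p.2 < N)%N.

Local Notation P := (qpath V A).
Local Notation BT := (Btype s t Z N).
Local Notation Lam := {ffun BT -> k^o}.
Local Notation QB := {ffun (A * BT)%type -> k^o}.
Local Notation tgt := (tgt t).
Local Notation valid := (valid s t).
Local Notation inB := (inB s t Z).
Local Notation bv := (bvec k s t Z N).
Local Notation lmul := (@lmul k V A s t Z N).
Local Notation coef := (@coef k V A s t Z N).
Local Notation e v := (bv (v, [::])).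
Local Notation arr := (arrow_path s).

Lemma mem_seqs_upto n (l : seq A) : (size l <= n)%N -> l \in seqs_upto A n.
Proof.
elim: n l => [|n IH] [|a l] //= le_ln; rewrite in_cons /=.
by rewrite (allpairs_f (fun a l => a :: l)) ?mem_enum ?IH.
Qed.

Lemma mem_Bseq p : (p \in Defs.Bseq s t Z N) = inB p.
Proof.
rewrite mem_filter andb_idr // => /B_bounded/ltnW.
by case: p => v l /mem_seqs_upto; apply: allpairs_f; rewrite mem_enum.
Qed.

Lemma inB_val (b : BT) : inB (val b).
Proof. by rewrite -mem_Bseq (valP b). Qed.

Lemma bvec_notB q : ~~ inB q -> bv q = 0.
Proof.
move=> notBq; apply/ffunP => b; rewrite !ffunE.
by case: eqP => // bq; case/negP: notBq; rewrite -bq inB_val.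
Qed.

Lemma coef_bvec q r : inB r -> coef (bv q) r = (r == q)%:R.
Proof. by move=> Br; rewrite /coef insubT ?mem_Bseq //= => ?; rewrite ffunE SubK. Qed.

Lemma coefDZ c x y r : coef (c *: x + y) r = c * coef x r + coef y r.
Proof. by rewrite /coef; case: insub => [b|] /=; rewrite ?ffunE ?mulr0 ?addr0. Qed.

Lemma bvec_expand (x : Lam) : x = \sum_(b : BT) x b *: bv (val b).
Proof.
apply/ffunP => c; rewrite sum_ffunE (bigD1 c) //= big1 => [|b nbc]; rewrite !ffunE.
  by rewrite eqxx /GRing.scale /= mulr1 addr0.
by rewrite val_eqE eq_sym (negbTE nbc) /GRing.scale /= mulr0.
Qed.

Fact lmul_is_linear x : linear (lmul x).
Proof.
move=> c y z; apply/ffunP => b; rewrite !ffunE scaler_sumr -big_split.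
by apply: eq_bigr => i _; rewrite coefDZ mulrDr mulrCA.
Qed.
HB.instance Definition _ x :=
  GRing.isLinear.Build k Lam Lam *:%R (lmul x) (lmul_is_linear x).

Definition lmulr y x := lmul x y.

Fact lmulr_is_linear y : linear (lmulr y).
Proof.
move=> c x z; apply/ffunP => b; rewrite !ffunE scaler_sumr -big_split.
by apply: eq_bigr => i _; rewrite coefDZ mulrDl -mulrA.
Qed.
HB.instance Definition _ y :=
  GRing.isLinear.Build k Lam Lam *:%R (lmulr y) (lmulr_is_linear y).

Lemma lmul0l y : lmul 0 y = 0.
Proof. exact: linear0 (lmulr y). Qed.

Lemma lmul0r x : lmul x 0 = 0.
Proof. exact: linear0. Qed.

Lemma lmulDl x1 x2 y : lmul (x1 + x2) y = lmul x1 y + lmul x2 y.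
Proof. exact: (linearD (lmulr y) x1 x2). Qed.

Lemma lmulDr x y1 y2 : lmul x (y1 + y2) = lmul x y1 + lmul x y2.
Proof. exact: linearD. Qed.

Lemma lmulZl c x y : lmul (c *: x) y = c *: lmul x y.
Proof. exact: (linearZZ (lmulr y) c x). Qed.

Lemma lmulZr c x y : lmul x (c *: y) = c *: lmul x y.
Proof. exact: linearZZ. Qed.

Lemma lmulBl x1 x2 y : lmul (x1 - x2) y = lmul x1 y - lmul x2 y.
Proof. exact: (linearB (lmulr y) x1 x2). Qed.

Lemma lmulBr x y1 y2 : lmul x (y1 - y2) = lmul x y1 - lmul x y2.
Proof. exact: linearB. Qed.

Lemma lmul_suml (I : Type) (r : seq I) (Pr : pred I) (F : I -> Lam) y :
  lmul (\sum_(i <- r | Pr i) F i) y = \sum_(i <- r | Pr i) lmul (F i) y.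
Proof. exact: (linear_sum (lmulr y) r Pr F). Qed.

Lemma lmul_sumr (I : Type) (r : seq I) (Pr : pred I) (F : I -> Lam) x :
  lmul x (\sum_(i <- r | Pr i) F i) = \sum_(i <- r | Pr i) lmul x (F i).
Proof. exact: linear_sum. Qed.

Lemma lmul_bvec p q :
  lmul (bv q) (bv p) = if tgt p == q.1 then bv (p.1, p.2 ++ q.2) else 0.
Proof.
apply/ffunP => c; rewrite ffunE; have Bc := inB_val c.
transitivity (\sum_(i < (size (val c).2).+1)
  [&& i == size p.2 :> nat, tgt p == q.1 & val c == (p.1, p.2 ++ q.2)]%:R : k).
  apply: eq_bigr => i _; rewrite !coef_bvec ?inB_suffix ?inB_prefix //.
  by rewrite -natrM mulnb andbC prefix_suffix_eq // -ltnS.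
have [_|ntpq] := eqVneq (tgt p) q.1; last first.
  by rewrite ffunE big1 // => i _; rewrite andbF.
rewrite ffunE; have [cE|_] := eqVneq (val c) (p.1, p.2 ++ q.2); last first.
  by rewrite big1 // => i _; rewrite !andbF.
have lt_pc : (size p.2 < (size (val c).2).+1)%N by rewrite cE size_cat ltnS leq_addr.
rewrite (bigD1 (Ordinal lt_pc)) //= eqxx big1 ?addr0 // => i.
by rewrite -val_eqE /= => /negbTE->.
Qed.

Lemma lmulA_bvec p q r :
  lmul (bv r) (lmul (bv q) (bv p)) = lmul (lmul (bv r) (bv q)) (bv p).
Proof.
case: p q r => [u p] [v q] [w r]; rewrite !lmul_bvec /=.
have [<-|npq] := eqVneq (tgt (u, p)) v; last first.
  by rewrite lmul0r; case: ifP; rewrite ?lmul0l // lmul_bvec /= (negbTE npq).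
by rewrite lmul_bvec /= tgt_cat; case: ifP; rewrite ?lmul0l // lmul_bvec /= eqxx catA.
Qed.

Lemma lmulA : associative lmul.
Proof.
move=> x y z; rewrite [x]bvec_expand !lmul_suml; apply: eq_bigr => a _.
rewrite [y]bvec_expand !(lmul_suml, lmul_sumr); apply: eq_bigr => b _.
rewrite [z]bvec_expand !(lmul_suml, lmul_sumr); apply: eq_bigr => c _.
by rewrite !(lmulZl, lmulZr) lmulA_bvec !scalerA mulrC mulrA.
Qed.

Lemma lmul_idem_l w q : lmul (e w) (bv q) = if tgt q == w then bv q else 0.
Proof. by case: q => v l; rewrite lmul_bvec /= cats0. Qed.

Lemma lmul_idem_r w q : lmul (bv q) (e w) = if w == q.1 then bv q else 0.
Proof. by case: q => v l; rewrite lmul_bvec /Defs.tgt /=; case: eqP => // ->. Qed.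

Lemma lmul_idem w : lmul (e w) (e w) = e w.
Proof. by rewrite lmul_idem_l eqxx. Qed.

Lemma inE_idem w : Defs.inE (e w).
Proof. by move=> b nb; rewrite ffunE; case: eqP => // bw; rewrite bw in nb. Qed.

Definition corner (w v : V) (x : Lam) : Lam := lmul (e w) (lmul x (e v)).

Lemma corner_bvec w v q :
  corner w v (bv q) = if (v == q.1) && (w == tgt q) then bv q else 0.
Proof.
rewrite /corner lmul_idem_r; case: (v == q.1); last by rewrite lmul0r.
by rewrite lmul_idem_l eq_sym.
Qed.

Lemma corner_coef w v x (g : BT) :
  corner w v x g = if (v == (val g).1) && (w == tgt (val g)) then x g else 0.
Proof.
have -> : corner w v x = \sum_(b : BT) x b *: corner w v (bv (val b)).
  by rewrite /corner [x in LHS]bvec_expand lmul_suml lmul_sumr;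
     apply: eq_bigr => b _; rewrite lmulZl lmulZr.
rewrite sum_ffunE (bigD1 g) //= big1 ?addr0 => [|b nbg]; rewrite corner_bvec.
  by case: ifP; rewrite !ffunE ?eqxx /GRing.scale /= ?mulr1 ?mulr0.
case: ifP => _; rewrite !ffunE ?val_eqE 1?[g == b]eq_sym ?(negbTE nbg).
all: by rewrite /GRing.scale /= mulr0.
Qed.

Lemma corner_idem_l w v x : lmul (e w) (corner w v x) = corner w v x.
Proof. by rewrite /corner lmulA lmul_idem. Qed.

Lemma corner_idem_r w v x : lmul (corner w v x) (e v) = corner w v x.
Proof. by rewrite /corner -!lmulA lmul_idem. Qed.

(* The value on the arrow [a] of the derivation attached to [f]; cutting down
   to the corner e_(t a) Lambda e_(s a) discards the non-parallel part of [f]. *)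
Definition arrow_image (f : QB) (a : A) : Lam :=
  corner (t a) (s a) [ffun g => f (a, g)].

Lemma parallel_arrow a p : parallel t (arr a) p = (s a == p.1) && (t a == tgt p).
Proof. by []. Qed.

Lemma arrow_image_coef f a g :
  arrow_image f a g = if parallel t (arr a) (val g) then f (a, g) else 0.
Proof. by rewrite corner_coef ffunE. Qed.

Lemma arrow_image_coefQ f a g : inQB f -> arrow_image f a g = f (a, g).
Proof. by move=> Qf; rewrite arrow_image_coef; case: ifP => // /negbT /Qf ->. Qed.

Lemma arrow_imageE f a :
  inQB f -> arrow_image f a = \sum_(g : BT) f (a, g) *: bv (val g).
Proof.
move=> Qf; rewrite [LHS]bvec_expand.
by apply: eq_bigr => g _; rewrite arrow_image_coefQ.
Qed.

Lemma arrow_image_idem_r f a : lmul (arrow_image f a) (e (s a)) = arrow_image f a.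
Proof. exact: corner_idem_r. Qed.

Lemma arrow_imageDZ c f g a :
  arrow_image (c *: f + g) a = c *: arrow_image f a + arrow_image g a.
Proof.
rewrite /arrow_image; have -> : [ffun h => (c *: f + g) (a, h)] =
          c *: [ffun h => f (a, h)] + [ffun h => g (a, h)] :> Lam.
  by apply/ffunP => h; rewrite !ffunE.
by rewrite /corner lmulDl lmulZl lmulDr lmulZr.
Qed.

(* The value on the path (v, l) of the derivation with values [D] on arrows,
   by the Leibniz rule along (v, a :: l) = (t a, l) * (v, [:: a]). *)
Fixpoint leibniz (D : A -> Lam) (v : V) (l : seq A) : Lam :=
  if l is a :: l' then
    lmul (leibniz D (t a) l') (bv (v, [:: a])) + lmul (bv (t a, l')) (D a)
  else 0.

Lemma eq_leibniz D1 D2 v l : D1 =1 D2 -> leibniz D1 v l = leibniz D2 v l.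
Proof. by move=> eqD; elim: l v => [|a l IH] v //=; rewrite IH eqD. Qed.

Lemma leibnizDZ c D1 D2 D v l : (forall a, D a = c *: D1 a + D2 a) ->
  leibniz D v l = c *: leibniz D1 v l + leibniz D2 v l.
Proof.
move=> DE; elim: l v => [|a l IH] v /=; first by rewrite scaler0 addr0.
by rewrite IH DE lmulDl lmulZl lmulDr lmulZr scalerDr addrACA.
Qed.

Lemma leibniz_idem_l D v l : lmul (e (tgt (v, l))) (leibniz D v l) = leibniz D v l.
Proof.
elim: l v => [|a l IH] v /=; first by rewrite lmul0r.
by rewrite -[tgt _]/(tgt (t a, l)) lmulDr !lmulA IH lmul_idem_l eqxx.
Qed.

Section LeibnizRule.
Variable D : A -> Lam.
Hypothesis D_idem_r : forall a, lmul (D a) (e (s a)) = D a.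

Lemma leibniz_idem_r v l : valid (v, l) -> lmul (leibniz D v l) (e v) = leibniz D v l.
Proof.
case: l => [|a l] /=; first by rewrite lmul0l.
rewrite valid_cons => /andP[/eqP <- _].
by rewrite lmulDl -!lmulA lmul_idem_r eqxx D_idem_r.
Qed.

Lemma leibniz_cat v l q : valid q -> tgt (v, l) = q.1 ->
  leibniz D v (l ++ q.2)
  = lmul (leibniz D q.1 q.2) (bv (v, l)) + lmul (bv q) (leibniz D v l).
Proof.
case: q => w m /= vq; elim: l v => [|a l IH] v /= tl.
  by move: vq; rewrite -tl /Defs.tgt /= => vq; rewrite lmul0r addr0 leibniz_idem_r.
have tl' : tgt (t a, l) = w := tl.
have E1 : bv (v, a :: l) = lmul (bv (t a, l)) (bv (v, [:: a])).
  by rewrite lmul_bvec /Defs.tgt /= eqxx.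
have E2 : bv (t a, l ++ m) = lmul (bv (w, m)) (bv (t a, l)).
  by rewrite lmul_bvec tl' eqxx.
by rewrite IH // E1 E2 lmulDl lmulDr !lmulA addrA.
Qed.

End LeibnizRule.

Local Notation repl := (repl k s t Z N).

Lemma repl_cons v a l b (g : P) :
  repl (v, a :: l) b g =
  (if a == b then bv (v, g.2 ++ l) else 0) + lmul (repl (t a, l) b g) (bv (v, [:: a])).
Proof.
rewrite /Defs.repl big_mkcond big_ord_recl /=.
congr (_ + _); first by case: (a == b); rewrite // /replace /= drop0.
rewrite [in RHS]big_mkcond lmul_suml; apply: eq_bigr => i _ /=.
case: ifP => _; last by rewrite lmul0l.
by rewrite lmul_bvec /Defs.tgt /= eqxx.
Qed.

Definition replf (f : QB) (p : P) : Lam :=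
  \sum_(q : A * BT) f q *: repl p q.1 (val q.2).

Lemma replf_cons f v a l :
  replf f (v, a :: l) = \sum_(g : BT) f (a, g) *: bv (v, (val g).2 ++ l)
                        + lmul (replf f (t a, l)) (bv (v, [:: a])).
Proof.
rewrite /replf; under eq_bigr => q _ do rewrite repl_cons scalerDr.
rewrite big_split lmul_suml; congr (_ + _); last first.
  by apply: eq_bigr => q _; rewrite lmulZl.
rewrite -(sum_pair_fst a (fun q => f q *: bv (v, (val q.2).2 ++ l))) [RHS]big_mkcond.
by apply: eq_bigr => q _; rewrite eq_sym; case: ifP; rewrite ?scaler0.
Qed.

Lemma lmul_arrow_image f a l : inQB f ->
  lmul (bv (t a, l)) (arrow_image f a)
  = \sum_(g : BT) f (a, g) *: bv (s a, (val g).2 ++ l).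
Proof.
move=> Qf; rewrite arrow_imageE // lmul_sumr; apply: eq_bigr => g _.
rewrite lmulZr lmul_bvec; have [|npar] := boolP (parallel t (arr a) (val g)).
  by rewrite parallel_arrow => /andP[/eqP-> /eqP->]; rewrite eqxx.
by rewrite Qf // !scale0r.
Qed.

Lemma leibniz_replf f v l :
  inQB f -> valid (v, l) -> leibniz (arrow_image f) v l = replf f (v, l).
Proof.
move=> Qf; elim: l v => [|a l IH] v /=.
  by move=> _; rewrite /replf big1 // => q _; rewrite /Defs.repl big_ord0 scaler0.
rewrite valid_cons => /andP[/eqP <- vl].
by rewrite replf_cons IH // lmul_arrow_image // addrC.
Qed.

Lemma psi1_coef f z b : psi1 f (z, b) = replf f (val z) b.
Proof.
rewrite /psi1 /replf !sum_ffunE; apply: eq_bigr => q _.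
rewrite [in LHS]ffunE [in LHS]sum_ffunE (bigD1 z) //= [X in _ + X]big1 ?addr0.
  by rewrite !ffunE /= eqxx.
by move=> p nzp; rewrite ffunE /= eq_sym (negbTE nzp).
Qed.

(* Locked so that rewriting with the big-sum lemmas never unfolds it. *)
Definition der_of (f : QB) (x : Lam) : Lam :=
  locked (\sum_(b : BT) x b *: leibniz (arrow_image f) (val b).1 (val b).2).

Fact der_of_is_linear f : linear (der_of f).
Proof.
move=> c x y; rewrite /der_of -!lock scaler_sumr -big_split; apply: eq_bigr => b _.
by rewrite !ffunE scalerDl scalerA.
Qed.
HB.instance Definition _ f :=
  GRing.isLinear.Build k Lam Lam *:%R (der_of f) (der_of_is_linear f).

Lemma der_ofZ f c x : der_of f (c *: x) = c *: der_of f x.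
Proof. exact: linearZZ. Qed.

Lemma der_of_sum f (I : Type) (r : seq I) (Pr : pred I) (F : I -> Lam) :
  der_of f (\sum_(i <- r | Pr i) F i) = \sum_(i <- r | Pr i) der_of f (F i).
Proof. exact: linear_sum. Qed.

Lemma der_ofDZ c f g x : der_of (c *: f + g) x = c *: der_of f x + der_of g x.
Proof.
rewrite /der_of -!lock scaler_sumr -big_split; apply: eq_bigr => b _.
by rewrite (leibnizDZ _ _ (arrow_imageDZ c f g)) scalerDr !scalerA mulrC.
Qed.

Lemma der_of_inB f q : inB q -> der_of f (bv q) = leibniz (arrow_image f) q.1 q.2.
Proof.
rewrite -mem_Bseq => qB; pose b : BT := Sub q qB; have -> : q = val b by rewrite SubK.
rewrite /der_of -!lock (bigD1 b) //= big1 ?addr0 => [|c ncb].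
  by rewrite ffunE eqxx scale1r.
rewrite ffunE; case: eqP => [cq|_]; last by rewrite scale0r.
by case/eqP: ncb; apply: val_inj; rewrite cq SubK.
Qed.

Lemma der_ofE f x : inQB f -> der_of f x = \sum_(b : BT) x b *: replf f (val b).
Proof.
move=> Qf; rewrite /der_of -!lock; apply: eq_bigr => b _.
by rewrite leibniz_replf // -surjective_pairing (inB_valid (inB_val b)).
Qed.

Lemma der_of_inE f x : Defs.inE x -> der_of f x = 0.
Proof.
move=> Ex; rewrite /der_of -!lock big1 // => -[[v [|a l]] bB] _ /=.
  by rewrite scaler0.
by rewrite Ex ?scale0r.
Qed.

Lemma isDer_linear (d : Lam -> Lam) : isDer d -> linear d.
Proof. by case. Qed.

Lemma isDerD (d : Lam -> Lam) : isDer d -> {morph d : x y / x + y}.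
Proof. by case=> d_lin _ _ x y; have := d_lin 1 x y; rewrite !scale1r. Qed.

Lemma der_comp_lmul (d1 d2 : Lam -> Lam) : isDer d1 -> isDer d2 -> forall x y,
  d1 (d2 (lmul x y)) = lmul (d1 (d2 x)) y + lmul x (d1 (d2 y))
                       + (lmul (d2 x) (d1 y) + lmul (d1 x) (d2 y)).
Proof.
move=> D1 D2 x y; have [_ M1 _] := D1; have [_ M2 _] := D2.
by rewrite M2 (isDerD D1) !M1 [lmul (d1 x) _ + _]addrC addrACA.
Qed.

Lemma isDer_commutator (d1 d2 : Lam -> Lam) : isDer d1 -> isDer d2 ->
  isDer (fun x => d1 (d2 x) - d2 (d1 x)).
Proof.
move=> D1 D2; have [L1 _ E1] := D1; have [L2 _ E2] := D2; split.
- by move=> c x y; rewrite L2 L1 L1 L2 scalerBr opprD addrACA.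
- move=> x y; rewrite (der_comp_lmul D1 D2) (der_comp_lmul D2 D1).
  rewrite [lmul (d1 x) _ + _]addrC opprD addrACA subrr addr0.
  by rewrite opprD addrACA lmulBl lmulBr.
- move=> u x Eu; split.
    by rewrite !(proj1 (E1 _ _ Eu), proj1 (E2 _ _ Eu)) lmulBr.
  by rewrite !(proj2 (E1 _ _ Eu), proj2 (E2 _ _ Eu)) lmulBl.
Qed.

Lemma replf_coef f p h : replf f p h = \sum_(q : A * BT) f q * repl p q.1 (val q.2) h.
Proof. by rewrite sum_ffunE; apply: eq_bigr => q _; rewrite ffunE. Qed.

Lemma bracket_coef f g a h :
  bracket f g (a, h) = \sum_(b : BT) g (a, b) * replf f (val b) h
                     - \sum_(b : BT) f (a, b) * replf g (val b) h.
Proof.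
transitivity (\sum_(q1 : A * BT) \sum_(q2 : A * BT)
  (f q1 * g q2 * (if q2.1 == a then repl (val q2.2) q1.1 (val q1.2) h else 0)
   - f q1 * g q2 * (if q1.1 == a then repl (val q1.2) q2.1 (val q2.2) h else 0))).
  rewrite /bracket sum_ffunE; apply: eq_bigr => q1 _; rewrite sum_ffunE.
  by apply: eq_bigr => q2 _; rewrite !ffunE /= scalerBr ![a == _]eq_sym.
under eq_bigr => q1 _ do rewrite sumrB.
rewrite sumrB exchange_big /=.
congr (_ - _).
- rewrite -(sum_pair_fst a (fun q => g q * replf f (val q.2) h)) [RHS]big_mkcond.
  apply: eq_bigr => q2 _; case: ifP => _.
    by rewrite replf_coef mulr_sumr; apply: eq_bigr => q1 _; rewrite mulrCA mulrA.
  by rewrite big1 // => q1 _; rewrite mulr0.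
- rewrite -(sum_pair_fst a (fun q => f q * replf g (val q.2) h)) [RHS]big_mkcond.
  apply: eq_bigr => q1 _; case: ifP => _.
    by rewrite replf_coef mulr_sumr; apply: eq_bigr => q2 _; rewrite mulrA.
  by rewrite big1 // => q2 _; rewrite mulr0.
Qed.

Section Relations.
Hypothesis Z_valid : forall z, z \in Z -> valid z.
Hypothesis Z_len : forall z, z \in Z -> (2 <= size z.2)%N.

Lemma psi1_leibniz f (z : Ztype Z) b :
  inQB f -> psi1 f (z, b) = leibniz (arrow_image f) (val z).1 (val z).2 b.
Proof.
move=> Qf; rewrite psi1_coef; case: z => [[v l] zZ] /=.
by rewrite leibniz_replf //; apply: Z_valid zZ.
Qed.

Lemma leibniz_relation f z :
  inKer f -> z \in Z -> leibniz (arrow_image f) z.1 z.2 = 0.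
Proof.
case=> Qf psi0 zZ; apply/ffunP => b.
by rewrite ffunE -[z](SubK (Ztype Z) zZ) -psi1_leibniz // psi0 ffunE.
Qed.

Lemma leibniz_notin_B f v l : inKer f -> valid (v, l) -> ~~ inB (v, l) ->
  leibniz (arrow_image f) v l = 0.
Proof.
move=> Kf vl /(valid_notin_B vl)[z zZ /infixP[l1 [l2 l_def]]].
have D_idem := arrow_image_idem_r f.
have bv_infix q : infix z.2 q.2 -> bv q = 0.
  by move=> zq; apply/bvec_notB/(notin_B_infix _ _ zZ zq).
move: vl; rewrite l_def valid_cat => /andP[_]; set T := tgt (v, l1) => vzl2.
rewrite (leibniz_cat D_idem (q := (T, z.2 ++ l2))) //=.
rewrite (bv_infix (T, z.2 ++ l2)) ?prefix_infix // lmul0l addr0.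
suff -> : leibniz (arrow_image f) T (z.2 ++ l2) = 0 by rewrite lmul0l.
move: vzl2; rewrite valid_cat => /andP[vz vl2].
rewrite (leibniz_cat D_idem (q := (tgt (T, z.2), l2))) //=.
rewrite (bv_infix (T, z.2)) ?infix_refl // lmul0r add0r.
have -> : T = z.1.
  apply: (valid_source_unique _ vz); first by move: (Z_len zZ); case: (z.2).
  by rewrite -surjective_pairing Z_valid.
by rewrite leibniz_relation // lmul0r.
Qed.

Lemma der_of_valid f q : inKer f -> valid q ->
  der_of f (bv q) = leibniz (arrow_image f) q.1 q.2.
Proof.
move=> Kf; have [/der_of_inB -> //|nBq] := boolP (inB q).
by case: q nBq => v l nBq vq; rewrite bvec_notB // linear0 leibniz_notin_B.
Qed.

Lemma der_of_arrow f a : der_of f (bv (arr a)) = arrow_image f a.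
Proof. by rewrite der_of_inB ?arrow_inB //= lmul0l add0r corner_idem_l. Qed.

Lemma der_of_lmul_bvec f p q : inKer f -> inB q -> inB p ->
  der_of f (lmul (bv q) (bv p))
  = lmul (der_of f (bv q)) (bv p) + lmul (bv q) (der_of f (bv p)).
Proof.
move=> Kf Bq Bp; have D_idem := arrow_image_idem_r f.
rewrite !der_of_inB // lmul_bvec; case: q p Bq Bp => [w m] [v l] Bq Bp /=.
(* If the paths do not compose, both sides vanish: the values of the
   derivation on (w, m) start at w and those on (v, l) end at tgt (v, l). *)
have [tl|ntl] := eqVneq (tgt (v, l)) w.
  rewrite der_of_valid /= ?(leibniz_cat D_idem (q := (w, m))) //.
    exact: inB_valid Bq.
  by rewrite valid_cat tl (inB_valid Bp) (inB_valid Bq).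
rewrite linear0 -(leibniz_idem_r D_idem (inB_valid Bq)) -lmulA lmul_idem_l (negbTE ntl).
rewrite lmul0r add0r -[leibniz _ v l]leibniz_idem_l lmulA lmul_idem_r /=.
by rewrite (negbTE ntl) lmul0l.
Qed.

Lemma der_of_lmul f x y : inKer f ->
  der_of f (lmul x y) = lmul (der_of f x) y + lmul x (der_of f y).
Proof.
move=> Kf; rewrite [x]bvec_expand !lmul_suml !der_of_sum !lmul_suml -big_split.
apply: eq_bigr => b _ /=; rewrite !(lmulZl, der_ofZ) -scalerDr; congr (_ *: _).
rewrite [y]bvec_expand !lmul_sumr !der_of_sum !lmul_sumr -big_split.
apply: eq_bigr => c _ /=; rewrite !(lmulZr, der_ofZ) -scalerDr; congr (_ *: _).
exact: der_of_lmul_bvec (inB_val b) (inB_val c).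
Qed.

Lemma der_of_isDer f : inKer f -> isDer (der_of f).
Proof.
move=> Kf; split; [exact: der_of_is_linear | by move=> x y; apply: der_of_lmul | ].
by move=> x y Ex; rewrite !der_of_lmul // der_of_inE // lmul0l lmul0r add0r addr0.
Qed.

Section Derivation.
Variable d : Lam -> Lam.
Hypothesis d_der : isDer d.
HB.instance Definition _ := GRing.isLinear.Build k Lam Lam *:%R d (isDer_linear d_der).

Lemma der_idem w : d (e w) = 0.
Proof.
have [_ dM dE] := d_der; have [dl dr] := dE (e w) (e w) (inE_idem w).
have := dM (e w) (e w); rewrite -[in RHS]dl -[in RHS]dr !lmul_idem => dee.
by apply: (addrI (d (e w))); rewrite -dee addr0.
Qed.

Lemma der_arrow_corner a : d (bv (arr a)) = corner (t a) (s a) (d (bv (arr a))).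
Proof.
have [_ _ dE] := d_der.
have arr_corner : bv (arr a) = corner (t a) (s a) (bv (arr a)).
  by rewrite corner_bvec /= !eqxx.
rewrite {1}arr_corner /corner (proj1 (dE _ _ (inE_idem _))).
by rewrite (proj2 (dE _ _ (inE_idem _))).
Qed.

Lemma der_path v l :
  valid (v, l) -> d (bv (v, l)) = leibniz (fun a => d (bv (arr a))) v l.
Proof.
have [_ dM _] := d_der; elim: l v => [|a l IH] v /=; first by rewrite der_idem.
rewrite valid_cons => /andP[/eqP <- vl].
have -> : bv (s a, a :: l) = lmul (bv (t a, l)) (bv (arr a)).
  by rewrite lmul_bvec /Defs.tgt /= eqxx.
by rewrite dM IH.
Qed.

Lemma der_of_eq f : (forall a, arrow_image f a = d (bv (arr a))) -> der_of f =1 d.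
Proof.
move=> fd x; rewrite /der_of -lock [in RHS](bvec_expand x) linear_sum.
apply: eq_bigr => b _; rewrite linearZ /= (eq_leibniz _ _ fd) -der_path //.
exact: inB_valid (inB_val b).
Qed.

Definition cochain_of : QB := [ffun q => d (bv (arr q.1)) q.2].

Lemma arrow_image_cochain a : arrow_image cochain_of a = d (bv (arr a)).
Proof.
rewrite [RHS]der_arrow_corner /arrow_image; congr corner.
by apply/ffunP => g; rewrite !ffunE.
Qed.

Lemma cochain_inQB : inQB cochain_of.
Proof.
move=> a g npar; rewrite ffunE /= der_arrow_corner corner_coef.
by rewrite -parallel_arrow (negbTE npar).
Qed.

Lemma cochain_inKer : inKer cochain_of.
Proof.
split; first exact: cochain_inQB.
apply/ffunP => -[z b]; rewrite psi1_leibniz; last exact: cochain_inQB.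
have zZ := valP z; rewrite (eq_leibniz _ _ arrow_image_cochain) -der_path; last first.
  by rewrite -surjective_pairing Z_valid.
rewrite -surjective_pairing bvec_notB ?linear0 ?ffunE //.
exact: notin_B_infix zZ (infix_refl _).
Qed.

Lemma der_of_cochain : der_of cochain_of =1 d.
Proof. exact: der_of_eq arrow_image_cochain. Qed.

End Derivation.

Lemma der_of_bracket f g : inKer f -> inKer g ->
  der_of (bracket f g) =1 (fun x => der_of f (der_of g x) - der_of g (der_of f x)).
Proof.
move=> Kf Kg; have DC := isDer_commutator (der_of_isDer Kf) (der_of_isDer Kg).
apply: (der_of_eq DC) => a; rewrite (der_arrow_corner DC a) /=; apply/ffunP => h.
rewrite arrow_image_coef corner_coef -parallel_arrow.
case: ifP => // _; have [Qf _] := Kf; have [Qg _] := Kg.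
rewrite bracket_coef !der_of_arrow !der_ofE // !ffunE !sum_ffunE.
by congr (_ - _); apply: eq_bigr => b _; rewrite ffunE arrow_image_coefQ.
Qed.

End Relations.

End Algebra.


Theorem proposition1p8 (k : closedFieldType) (V A : finType) (s t : A -> V)
    (Z : seq (qpath V A)) (N : nat)
    (HZvalid : forall z, z \in Z -> valid s t z)
    (HZlen : forall z, z \in Z -> (2 <= size z.2)%N)
    (HZmin : forall z z', z \in Z -> z' \in Z -> infix z.2 z'.2 -> z = z')
    (HfinB : forall p, inB s t Z p -> (size p.2 < N)%N) :
  exists phi : QB k s t Z N -> (Lam k s t Z N -> Lam k s t Z N),
    [/\ (forall f, inKer f -> isDer (phi f)),
        (forall d, isDer d -> exists2 f, inKer f & phi f =1 d),
        (forall f g, inKer f -> inKer g -> phi f =1 phi g -> f = g),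
        (forall (c : k) f g, inKer f -> inKer g ->
           phi (c *: f + g) =1 (fun x => c *: phi f x + phi g x)) &
        (forall f g, inKer f -> inKer g ->
           phi (bracket f g) =1 (fun x => phi f (phi g x) - phi g (phi f x)))].
Proof.
exists (@der_of k V A s t Z N); split.
- exact: der_of_isDer HfinB HZvalid HZlen.
- move=> d Dd; exists (cochain_of d); last exact: (der_of_cochain HfinB Dd).
  exact: (cochain_inKer HfinB HZvalid Dd).
- move=> f g [Qf _] [Qg _] eq_fg; apply/ffunP => -[a h].
  rewrite -(arrow_image_coefQ HfinB _ _ Qf) -(arrow_image_coefQ HfinB _ _ Qg).
  by rewrite -!(der_of_arrow HfinB HZlen) eq_fg.
- by move=> c f g _ _ x; apply: der_ofDZ.
- exact: der_of_bracket HfinB HZvalid HZlen.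
Qed.
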